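(* Let $\mathcal S$ be a Garside family in a left-cancellative category $\mathcal C$, and let $\mathcal S'$ be a subfamily of $\mathcal S^\sharp$ such that $\mathcal S'(\mathcal S'\cap\mathcal C^\times)\subseteq\mathcal S'$ and every element of $\mathcal S'^{\,2}$ admits an $\mathcal S$-normal decomposition all of whose entries lie in $\mathcal S'$. Then every element of the subcategory of $\mathcal C$ generated by $\mathcal S'$ admits an $\mathcal S$-normal decomposition all of whose entries lie in $\mathcal S'$.
   Context: A category is left-cancellative if $fg=fg'\Rightarrow g=g'$. $\mathcal C^\times$ is the family of invertible elements; $\mathcal S^\sharp=\mathcal S\mathcal C^\times\cup\mathcal C^\times$; $\mathcal S'^{\,2}$ is the family of products $s_1s_2$ with $s_1,s_2\in\mathcal S'$, and $\mathcal S'(\mathcal S'\cap\mathcal C^\times)$ the family of products $s\epsilon$ with $s\in\mathcal S'$, $\epsilon\in\mathcal S'\cap\mathcal C^\times$. $f\preccurlyeq g$ means $g=fg'$ for some $g'$. A length-two path $(g_1,g_2)$ is $\mathcal S$-greedy if for all $s\in\mathcal S$ and $f\in\mathcal C$ with $fg_1$ defined, $s\preccurlyeq fg_1g_2$ implies $s\preccurlyeq fg_1$; a path is $\mathcal S$-greedy if all its length-two subpaths are. A path is $\mathcal S$-normal if it is $\mathcal S$-greedy with all entries in $\mathcal S^\sharp$. An $\mathcal S$-normal decomposition of $g$ is an $\mathcal S$-normal path whose product is $g$. $\mathcal S$ is a Garside family in $\mathcal C$ if every element of $\mathcal C$ admits an $\mathcal S$-normal decomposition. *)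

From Stdlib Require Import List.
Import ListNotations.
Set Implicit Arguments.

(* A category presented by its family of elements (morphisms) with source,
   target, identities and a composition [comp f g] written "fg" in the paper
   (f first, then g); [comp f g] is meaningful only when [tgt f = src g]. *)
Record Category := {
  Ob : Type;
  Mor : Type;
  src : Mor -> Ob;
  tgt : Mor -> Ob;
  idm : Ob -> Mor;
  comp : Mor -> Mor -> Mor;
  src_id : forall x, src (idm x) = x;
  tgt_id : forall x, tgt (idm x) = x;
  src_comp : forall f g, tgt f = src g -> src (comp f g) = src f;
  tgt_comp : forall f g, tgt f = src g -> tgt (comp f g) = tgt g;
  id_l : forall f, comp (idm (src f)) f = f;
  id_r : forall f, comp f (idm (tgt f)) = f;
  assoc : forall f g h, tgt f = src g -> tgt g = src h ->
            comp (comp f g) h = comp f (comp g h)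
}.

Arguments src {c} _.
Arguments tgt {c} _.
Arguments idm {c} _.
Arguments comp {c} _ _.

Section Defs.
Variable C : Category.

Definition left_cancellative : Prop :=
  forall f g g' : Mor C, tgt f = src g -> tgt f = src g' ->
    comp f g = comp f g' -> g = g'.

Definition invertible (f : Mor C) : Prop :=
  exists g, tgt f = src g /\ tgt g = src f /\
    comp f g = idm (src f) /\ comp g f = idm (tgt f).

Definition sharp (S : Mor C -> Prop) (g : Mor C) : Prop :=
  (exists s e, S s /\ invertible e /\ tgt s = src e /\ g = comp s e)
  \/ invertible g.

Definition prefix (f g : Mor C) : Prop :=
  exists g', tgt f = src g' /\ g = comp f g'.

Definition greedy2 (S : Mor C -> Prop) (g1 g2 : Mor C) : Prop :=
  forall s f, S s -> tgt f = src g1 ->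
    prefix s (comp (comp f g1) g2) -> prefix s (comp f g1).

Fixpoint is_path (x : Ob C) (l : list (Mor C)) : Prop :=
  match l with
  | [] => True
  | a :: l' => src a = x /\ is_path (tgt a) l'
  end.

Fixpoint prod (x : Ob C) (l : list (Mor C)) : Mor C :=
  match l with
  | [] => idm x
  | a :: l' => comp a (prod (tgt a) l')
  end.

Fixpoint greedy (S : Mor C -> Prop) (l : list (Mor C)) : Prop :=
  match l with
  | a :: ((b :: _) as l') => greedy2 S a b /\ greedy S l'
  | _ => True
  end.

Definition normal (S : Mor C -> Prop) (l : list (Mor C)) : Prop :=
  greedy S l /\ Forall (sharp S) l.

Definition normal_decomp (S : Mor C -> Prop) (g : Mor C) (l : list (Mor C)) : Prop :=
  is_path (src g) l /\ prod (src g) l = g /\ normal S l.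

Definition Garside_family (S : Mor C -> Prop) : Prop :=
  forall g : Mor C, exists l, normal_decomp S g l.

Inductive generated (S' : Mor C -> Prop) : Mor C -> Prop :=
| gen_id : forall x, generated S' (idm x)
| gen_in : forall s, S' s -> generated S' s
| gen_comp : forall f g, tgt f = src g -> generated S' f -> generated S' g ->
    generated S' (comp f g).

End Defs.

(* Everything reduces to multiplying an S'-normal path t1 t2 ... on the left
   by one element s of S'.  Take an S-normal decomposition u1 u2 ... of s t1
   with entries in S'.  As s and t1 lie in S^#, greediness gives s <= u1, say
   u1 = s z, and then t1 <= z u2; so the entries after u2 are invertible and,
   by the closure of S' under right multiplication by S' ∩ C^x, can be absorbed
   into u2.  The resulting element of S' is pushed along t2 t3 ... by
   induction, and greediness at the junction with u1 follows from that of the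
   two given paths.  Concatenation, hence the generated subcategory, follows by
   induction on the left factor. *)
From Stdlib Require Import List.
Import ListNotations.

Ltac solve_ends :=
  solve [ repeat (first [ rewrite src_comp by solve_ends
                        | rewrite tgt_comp by solve_ends
                        | rewrite src_id | rewrite tgt_id ]); congruence ].

Section Paths.
Variable C : Category.

Lemma idm_comp x (f : Mor C) : src f = x -> comp (idm x) f = f.
Proof. intros <-; apply id_l. Qed.

Lemma comp_idm x (f : Mor C) : tgt f = x -> comp f (idm x) = f.
Proof. intros <-; apply id_r. Qed.

Lemma src_prod x l : is_path C x l -> src (prod C x l) = x.
Proof.
  revert x; induction l as [|a l IH]; intros x Hp; simpl in *.
  - apply src_id.
  - destruct Hp as [Ha Hl]. rewrite src_comp; auto. rewrite IH; auto.
Qed.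

Lemma prefix_comp_r s a b :
  prefix C s a -> tgt a = src b -> prefix C s (comp a b).
Proof.
  intros [c [Hc ->]] Hab. rewrite tgt_comp in Hab by assumption.
  exists (comp c b). split; [solve_ends | apply assoc; auto].
Qed.

Lemma prefix_comp_l a b g :
  tgt a = src b -> prefix C (comp a b) g -> prefix C a g.
Proof.
  intros Hab [c [Hc ->]]. rewrite tgt_comp in Hc by assumption.
  exists (comp b c). split; [solve_ends | apply assoc; auto].
Qed.

Lemma prefix_comp_invertible s e g :
  invertible C e -> tgt s = src e -> prefix C s g -> prefix C (comp s e) g.
Proof.
  intros [e' [He1 [He2 [He3 He4]]]] Hse [c [Hc ->]].
  exists (comp e' c). split; [solve_ends |].
  rewrite assoc, <- (assoc C e e' c), He3, idm_comp by solve_ends.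
  reflexivity.
Qed.

Lemma invertible_prefix e g : invertible C e -> src e = src g -> prefix C e g.
Proof.
  intros [e' [He1 [He2 [He3 He4]]]] Heg.
  exists (comp e' g). split; [solve_ends |].
  rewrite <- assoc, He3, idm_comp by solve_ends. reflexivity.
Qed.

Lemma greedy_tail S a l : greedy C S (a :: l) -> greedy C S l.
Proof. destruct l; simpl; tauto. Qed.

Lemma greedy_prefix_head S u l :
  greedy C S (u :: l) -> is_path C (tgt u) l ->
  forall s f, S s -> tgt f = src u ->
  prefix C s (comp f (comp u (prod C (tgt u) l))) -> prefix C s (comp f u).
Proof.
  revert u; induction l as [|v l IH]; intros u Hg Hp s f Hs Hf Hpre; simpl in *.
  - rewrite id_r in Hpre. exact Hpre.
  - destruct Hg as [Huv Hg], Hp as [Hv Hp].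
    pose proof (src_prod _ _ Hp).
    apply Huv; auto.
    apply (IH v Hg Hp s (comp f u) Hs); [solve_ends |].
    rewrite assoc by solve_ends. exact Hpre.
Qed.

Lemma sharp_prefix_greedy_head S g f u U :
  sharp C S g -> greedy C S (u :: U) -> is_path C (tgt u) U -> tgt f = src u ->
  prefix C g (comp f (comp u (prod C (tgt u) U))) -> prefix C g (comp f u).
Proof.
  intros [[s [e [Hs [He [Hse ->]]]]] | Hg] Hgr Hp Hf Hpre.
  - apply prefix_comp_invertible; auto.
    apply (greedy_prefix_head S u U Hgr Hp s f Hs Hf).
    exact (prefix_comp_l _ _ _ Hse Hpre).
  - apply invertible_prefix; auto.
    destruct Hpre as [c [Hc Hgc]].
    pose proof (src_prod _ _ Hp).
    rewrite <- (src_comp C g c Hc), <- Hgc. solve_ends.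
Qed.

Lemma tgt_prod_factor u R s t :
  is_path C (tgt u) R -> tgt s = src t ->
  comp u (prod C (tgt u) R) = comp s t -> tgt (prod C (tgt u) R) = tgt t.
Proof.
  intros HpR Hst E. pose proof (src_prod _ _ HpR).
  rewrite <- (tgt_comp C u (prod C (tgt u) R)), E by auto. solve_ends.
Qed.

Lemma greedy2_cons_factor S s t l u R v V :
  greedy C S (u :: R) -> is_path C (tgt u) R ->
  greedy C S (t :: l) -> is_path C (tgt t) l ->
  tgt s = src t -> comp u (prod C (tgt u) R) = comp s t ->
  is_path C (tgt u) (v :: V) ->
  prod C (tgt u) (v :: V) = comp (prod C (tgt u) R) (prod C (tgt t) l) ->
  greedy2 C S u v.
Proof.
  intros HgU HpR Hgt Hpl Hst E [Hv HpV] EV sg f HS Hf Hpre; simpl in EV.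
  pose proof (tgt_prod_factor u R s t HpR Hst E) as HMt.
  set (M := prod C (tgt u) R) in *.
  set (P := prod C (tgt t) l) in *.
  set (Q := prod C (tgt v) V) in *.
  assert (HM : src M = tgt u) by (apply src_prod; auto).
  assert (HP : src P = tgt t) by (apply src_prod; auto).
  assert (HQ : src Q = tgt v) by (apply src_prod; auto).
  assert (Hus : src u = src s).
  { rewrite <- (src_comp C u M), E by congruence. solve_ends. }
  apply (greedy_prefix_head S u R HgU HpR sg f HS Hf). fold M. rewrite E.
  rewrite <- assoc by solve_ends.
  apply (greedy_prefix_head S t l Hgt Hpl sg (comp f s) HS); [solve_ends |]. fold P.
  assert (Eprod : comp (comp (comp f u) v) Q = comp (comp f s) (comp t P)).
  { rewrite (assoc C (comp f u) v Q), EV by solve_ends.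
    rewrite (assoc C f u (comp M P)), <- (assoc C u M P), E by solve_ends.
    rewrite (assoc C s t P), <- (assoc C f s (comp t P)) by solve_ends.
    reflexivity. }
  rewrite <- Eprod. apply prefix_comp_r; [exact Hpre | solve_ends].
Qed.

Section LeftCancellative.
Hypothesis LC : left_cancellative C.

Lemma right_inverse_invertible a b :
  tgt a = src b -> comp a b = idm (src a) -> invertible C a /\ invertible C b.
Proof.
  intros Hab E.
  assert (Hba : tgt b = src a).
  { rewrite <- (tgt_comp C a b Hab), E. apply tgt_id. }
  assert (E' : comp b a = idm (tgt a)).
  { apply (LC a); [solve_ends | symmetry; apply src_id |].
    rewrite <- assoc, E, id_l, id_r by auto. reflexivity. }
  split.
  - exists b. repeat split; auto.
  - exists a. repeat split; auto.
    + rewrite E', Hab. reflexivity.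
    + rewrite E, Hba. reflexivity.
Qed.

Lemma invertible_comp_factors a b :
  tgt a = src b -> invertible C (comp a b) -> invertible C a /\ invertible C b.
Proof.
  intros Hab [c [H1 [H2 [H3 H4]]]].
  rewrite tgt_comp in H1 by auto. rewrite src_comp in H2, H3 by auto.
  rewrite tgt_comp in H4 by auto.
  split.
  - apply (right_inverse_invertible a (comp b c)); [solve_ends |].
    rewrite <- assoc by auto. exact H3.
  - apply (right_inverse_invertible b (comp c a)); [solve_ends |].
    apply (LC a); [solve_ends | solve_ends |].
    rewrite <- (assoc C a b (comp c a)), <- (assoc C (comp a b) c a), H3
      by solve_ends.
    rewrite id_l, <- Hab, id_r. reflexivity.
Qed.

Lemma prod_invertible_entries x l :
  is_path C x l -> invertible C (prod C x l) -> Forall (invertible C) l.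
Proof.
  revert x; induction l as [|a l IH]; intros x Hp Hi; simpl in *; constructor;
    destruct Hp as [Ha Hl].
  - apply (invertible_comp_factors a (prod C (tgt a) l)); auto.
    rewrite src_prod; auto.
  - apply (IH (tgt a)); auto.
    apply (invertible_comp_factors a (prod C (tgt a) l)); auto.
    rewrite src_prod; auto.
Qed.

Lemma sharp_factor_greedy S g h f u U :
  sharp C S g -> greedy C S (u :: U) -> is_path C (tgt u) U ->
  tgt f = src u -> tgt g = src h ->
  comp f (comp u (prod C (tgt u) U)) = comp g h ->
  exists z, tgt g = src z /\ tgt z = tgt u /\ comp f u = comp g z /\
            h = comp z (prod C (tgt u) U).
Proof.
  intros Hg Hgr Hp Hf Hgh E.
  pose proof (src_prod _ _ Hp) as HP.
  destruct (sharp_prefix_greedy_head S g f u U Hg Hgr Hp Hf) as [z [Hz Efu]].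
  { rewrite E. exists h. auto. }
  assert (Hzu : tgt z = tgt u).
  { rewrite <- (tgt_comp C g z Hz), <- Efu. solve_ends. }
  exists z. repeat split; auto.
  apply (LC g); [auto | solve_ends |].
  rewrite <- E, <- (assoc C f u) by solve_ends. rewrite Efu.
  apply assoc; solve_ends.
Qed.

Lemma sharp2_greedy_tail_invertible S s t u1 u2 R :
  sharp C S s -> sharp C S t -> tgt s = src t ->
  greedy C S (u1 :: u2 :: R) -> is_path C (src s) (u1 :: u2 :: R) ->
  prod C (src s) (u1 :: u2 :: R) = comp s t ->
  invertible C (prod C (tgt u2) R).
Proof.
  intros Hs Ht Hst Hgr [Hu1 [Hu2 HR]] E; simpl in E.
  pose proof (src_prod _ _ HR) as HZ.
  destruct (sharp_factor_greedy S s t (idm (src s)) u1 (u2 :: R) Hs Hgr)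
    as [z [_ [Hzu [_ Et]]]]; simpl; auto.
  { solve_ends. }
  { rewrite idm_comp; [exact E | solve_ends]. }
  destruct (sharp_factor_greedy S t (idm (tgt t)) z u2 R Ht (greedy_tail _ _ _ Hgr) HR)
    as [z' [Hz' [Hz'u [_ E1]]]].
  { congruence. }
  { symmetry; apply src_id. }
  { rewrite comp_idm; auto. }
  apply (right_inverse_invertible z' (prod C (tgt u2) R)); [congruence |].
  rewrite <- Hz'. symmetry. exact E1.
Qed.

End LeftCancellative.
End Paths.

Section GeneratedSubcategory.
Variable C : Category.
Variables S S' : Mor C -> Prop.
Hypothesis LC : left_cancellative C.
Hypothesis S'_sharp : forall s, S' s -> sharp C S s.
Hypothesis S'_comp_invertible :
  forall s e, S' s -> S' e -> invertible C e -> tgt s = src e -> S' (comp s e).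
Hypothesis S'_square_normal : forall s1 s2, S' s1 -> S' s2 -> tgt s1 = src s2 ->
  exists l, normal_decomp C S (comp s1 s2) l /\ Forall S' l.

Definition greedy_decomp_in (x : Ob C) (g : Mor C) (l : list (Mor C)) : Prop :=
  is_path C x l /\ prod C x l = g /\ greedy C S l /\ Forall S' l.

Lemma greedy_decomp_src {x g l} : greedy_decomp_in x g l -> src g = x.
Proof. intros [Hp [<- _]]. apply src_prod; auto. Qed.

Lemma S'_comp_invertible_path x w :
  S' x -> Forall (fun e => S' e /\ invertible C e) w -> is_path C (tgt x) w ->
  S' (comp x (prod C (tgt x) w)).
Proof.
  revert x; induction w as [|e w IH]; intros x Hx Hw Hp; simpl in *.
  - rewrite id_r. exact Hx.
  - inversion Hw as [|? ? [HSe He] Hw']; subst. destruct Hp as [Hxe Hp].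
    pose proof (src_prod C _ _ Hp).
    rewrite <- assoc by solve_ends.
    assert (Hxe' : tgt e = tgt (comp x e)) by solve_ends.
    rewrite Hxe' in Hp |- *. apply IH; auto.
Qed.

Lemma S'_normal_tail s t u1 u2 R :
  S' s -> S' t -> tgt s = src t ->
  normal_decomp C S (comp s t) (u1 :: u2 :: R) -> Forall S' (u1 :: u2 :: R) ->
  S' (prod C (tgt u1) (u2 :: R)).
Proof.
  intros Hs Ht Hst [Hp [E [Hg _]]] HF.
  rewrite src_comp in Hp, E by assumption.
  pose proof (Forall_inv_tail HF) as HF2.
  assert (HRi : Forall (invertible C) R).
  { apply (prod_invertible_entries C LC (tgt u2)); [apply Hp |].
    apply (sharp2_greedy_tail_invertible C LC S s t u1 u2 R); auto. }
  destruct Hp as [_ [_ HR]].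
  apply S'_comp_invertible_path.
  - exact (Forall_inv HF2).
  - exact (Forall_and (Forall_inv_tail HF2) HRi).
  - exact HR.
Qed.

Lemma greedy_decomp_cons_head s t l u R V :
  greedy C S (t :: l) -> is_path C (tgt t) l -> tgt s = src t ->
  normal_decomp C S (comp s t) (u :: R) -> Forall S' (u :: R) ->
  greedy_decomp_in (tgt u) (comp (prod C (tgt u) R) (prod C (tgt t) l)) V ->
  greedy_decomp_in (src s) (comp s (comp t (prod C (tgt t) l))) (u :: V).
Proof.
  intros Hg Hpl Hst [[Hu HpR] [EU [HgU _]]] HF HV.
  rewrite src_comp in Hu, EU by assumption. simpl in EU.
  pose proof (src_prod C _ _ HpR). pose proof (src_prod C _ _ Hpl).
  pose proof (tgt_prod_factor C u R s t HpR Hst EU).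
  destruct HV as [HpV [EV [HgV HFV]]].
  split; [| split; [| split]].
  - split; auto.
  - simpl. rewrite EV, <- assoc, EU by solve_ends. apply assoc; solve_ends.
  - destruct V as [|v V]; simpl; auto. split; auto.
    apply (greedy2_cons_factor C S s t l u R v V); auto.
  - constructor; auto. exact (Forall_inv HF).
Qed.

Lemma greedy_decomp_cons l : forall s g, S' s ->
  greedy_decomp_in (tgt s) g l -> exists V, greedy_decomp_in (src s) (comp s g) V.
Proof.
  induction l as [|t l IH]; intros s g Hs [Hp [<- [Hg HF]]].
  - exists [s]. repeat split; auto.
  - destruct Hp as [Hts Hpl]. simpl.
    pose proof (Forall_inv HF) as Ht. pose proof (Forall_inv_tail HF) as HFl.
    pose proof (greedy_tail C _ _ _ Hg) as Hgl.
    pose proof (src_prod C _ _ Hpl) as HP.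
    set (P := prod C (tgt t) l) in *.
    destruct (S'_square_normal s t Hs Ht (eq_sym Hts)) as [U [HU HUF]].
    pose proof HU as [HpU [EU _]]. rewrite src_comp in HpU, EU by auto.
    destruct U as [|u R]; simpl in EU.
    + assert (Hs_t : src s = tgt t).
      { rewrite <- (tgt_comp C s t), <- EU by auto. symmetry; apply tgt_id. }
      exists l. rewrite Hs_t. repeat split; auto.
      rewrite <- assoc, <- EU, idm_comp by solve_ends. reflexivity.
    + destruct HpU as [Hu HpR].
      pose proof (tgt_prod_factor C u R s t HpR (eq_sym Hts) EU) as HMt.
      enough (exists V, greedy_decomp_in (tgt u) (comp (prod C (tgt u) R) P) V)
        as [V HV].
      { exists (u :: V). apply (greedy_decomp_cons_head s t l u R V); auto. }
      destruct R as [|u2 R].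
      * simpl in HMt. rewrite tgt_id in HMt.
        exists l. simpl. rewrite HMt, idm_comp by auto. repeat split; auto.
      * pose proof (S'_normal_tail s t u u2 R Hs Ht (eq_sym Hts) HU HUF) as Hm.
        assert (HmP : greedy_decomp_in (tgt (prod C (tgt u) (u2 :: R))) P l)
          by (rewrite HMt; repeat split; auto).
        destruct (IH _ P Hm HmP) as [V HV].
        rewrite (src_prod C _ _ HpR) in HV. exists V. exact HV.
Qed.

Lemma greedy_decomp_comp L : forall x f g M,
  greedy_decomp_in x f L -> greedy_decomp_in (tgt f) g M ->
  exists W, greedy_decomp_in x (comp f g) W.
Proof.
  induction L as [|a L IH]; intros x f g M [Hp [<- [Hg HF]]] HM;
    pose proof (greedy_decomp_src HM) as Hsg; simpl in *.
  - rewrite tgt_id in Hsg, HM. exists M. rewrite idm_comp by auto. exact HM.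
  - destruct Hp as [Ha Hp]. pose proof (src_prod C _ _ Hp).
    rewrite tgt_comp in HM, Hsg by auto.
    destruct (IH (tgt a) (prod C (tgt a) L) g M) as [W' HW']; auto.
    { repeat split; auto. exact (greedy_tail C _ _ _ Hg). exact (Forall_inv_tail HF). }
    destruct (greedy_decomp_cons W' a _ (Forall_inv HF) HW') as [W HW].
    exists W. rewrite Ha in HW. rewrite assoc by congruence. exact HW.
Qed.

Lemma generated_greedy_decomp g :
  generated C S' g -> exists l, greedy_decomp_in (src g) g l.
Proof.
  induction 1 as [x | s Hs | f g Hfg _ [L HL] _ [M HM]].
  - exists []. rewrite src_id. repeat split; auto.
  - exists [s]. repeat split; auto. apply id_r.
  - rewrite <- Hfg in HM. rewrite src_comp by exact Hfg.
    exact (greedy_decomp_comp L (src f) f g M HL HM).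
Qed.

End GeneratedSubcategory.

Theorem mainTheorem12 (C : Category) (S S' : Mor C -> Prop) :
  left_cancellative C ->
  Garside_family C S ->
  (forall s, S' s -> sharp C S s) ->
  (forall s e, S' s -> S' e -> invertible C e -> tgt s = src e -> S' (comp s e)) ->
  (forall s1 s2, S' s1 -> S' s2 -> tgt s1 = src s2 ->
     exists l, normal_decomp C S (comp s1 s2) l /\ Forall S' l) ->
  forall g, generated C S' g ->
    exists l, normal_decomp C S g l /\ Forall S' l.
Proof.
  intros LC _ S'_sharp S'_comp_invertible S'_square_normal g Hg.
  destruct (generated_greedy_decomp C S S' LC S'_sharp S'_comp_invertible
              S'_square_normal g Hg) as [l [Hp [Hl [Hgr HF]]]].
  exists l. repeat split; auto.
  exact (Forall_impl _ S'_sharp HF).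
Qed.
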